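(* Let $N\geq 2$ and let $\Sigma$ be the one-sided shift on $\{0,1,\dots,N-1\}^{\mathbb{N}_0}$, ordered lexicographically. Then for every $L\geq N+2$, $\Sigma$ has forbidden root patterns of length $L$.
   Context: $\{0,1,\dots,N-1\}^{\mathbb{N}_0}$ is the set of sequences $\omega=(\omega_0,\omega_1,\dots)$ with $\omega_n\in\{0,\dots,N-1\}$, and $\Sigma(\omega_0,\omega_1,\dots)=(\omega_1,\omega_2,\dots)$; $\omega<\omega'$ lexicographically iff at the first index $n$ where they differ, $\omega_n<\omega'_n$. $\mathcal{S}_L$ is the set of permutations $\pi=[\pi_0,\dots,\pi_{L-1}]$ of $\{0,\dots,L-1\}$. $\omega$ defines $\pi$ if $\Sigma^{\pi_0}(\omega)<\dots<\Sigma^{\pi_{L-1}}(\omega)$; $\pi$ is forbidden if no $\omega$ defines it. For $\pi\in\mathcal{S}_L$ and $M>L$, a pattern $\sigma=[\sigma_0,\dots,\sigma_{M-1}]\in\mathcal{S}_M$ is an outgrowth pattern of $\pi$ if there exist $n\in\{0,1,\dots,M-L\}$ and indices $i_0<i_1<\dots<i_{L-1}$ with $\sigma_{i_k}=\pi_k+n$ for $k=0,\dots,L-1$ (equivalently, $\sigma^{-1}$ contains $\pi^{-1}$ as a consecutive pattern). A forbidden root pattern is a forbidden pattern that is not an outgrowth pattern of any forbidden pattern of shorter length. *)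

From mathcomp Require Import all_boot all_fingroup.
Set Implicit Arguments. Unset Strict Implicit. Unset Printing Implicit Defensive.

Definition word (N : nat) := nat -> 'I_N.

Definition shiftk (N : nat) (k : nat) (w : word N) : word N := fun n => w (n + k).

Definition lexlt (N : nat) (w w' : word N) : Prop :=
  exists n, (forall k, k < n -> w k = w' k) /\ (w n < w' n)%N.

Definition defines (N L : nat) (w : word N) (pi : {perm 'I_L}) : Prop :=
  forall i j : 'I_L, j = i.+1 :> nat ->
    lexlt (shiftk (pi i) w) (shiftk (pi j) w).

Definition forbidden (N L : nat) (pi : {perm 'I_L}) : Prop :=
  ~ (exists w : word N, defines w pi).

Definition outgrowth (L M : nat) (pi : {perm 'I_L}) (sigma : {perm 'I_M}) : Prop :=
  (L < M)%N /\
  exists (n : nat) (idx : 'I_L -> 'I_M),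
    (n <= M - L)%N /\
    (forall k k' : 'I_L, (k < k')%N -> (idx k < idx k')%N) /\
    (forall k : 'I_L, val (sigma (idx k)) = val (pi k) + n).

Definition forbidden_root (N L : nat) (pi : {perm 'I_L}) : Prop :=
  forbidden N pi /\
  forall (L' : nat) (pi' : {perm 'I_L'}), (L' < L)%N ->
    forbidden N pi' -> ~ outgrowth pi' pi.

From mathcomp Require Import all_boot all_fingroup.
From mathcomp Require Import zify.
Set Implicit Arguments. Unset Strict Implicit. Unset Printing Implicit Defensive.

(* The root pattern lists the shifts [N, N+1, ..., L-2], then [0, ..., N-1] in
   a zigzag order, then [L-1].  The positions of [L-2, zigzag 0, ...,
   zigzag (N-1)] increase while those of their successors [L-1, zigzag 0 + 1,
   ..., zigzag (N-1) + 1] decrease, so in a defining word the first letters of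
   these N+1 shifts would strictly increase: the pattern is forbidden.  A proper
   outgrowth [pi'] either misses the value [L-1] (offset 0) or the value [0]
   (positive offset), and the pattern without that value is realized by an
   explicit word; hence [pi'] is realized too and is not forbidden. *)

Section Lexicographic.
Variable N : nat.
Implicit Types (u v x : word N) (w : word N).

Lemma lexlt_asym u v : lexlt u v -> lexlt v u -> False.
Proof.
move=> [n [Hn Hl]] [n' [Hn' Hl']].
have [lt|gt|eq] := ltngtP n n'.
- by move: Hl; rewrite (Hn' _ lt); lia.
- by move: Hl'; rewrite (Hn _ gt); lia.
- by move: Hl'; rewrite -eq; lia.
Qed.

Lemma lexlt_trans u v x : lexlt u v -> lexlt v x -> lexlt u x.
Proof.
move=> [n [Hn Hl]] [n' [Hn' Hl']]; exists (minn n n'); split.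
  by move=> k; rewrite leq_min => /andP[kn kn']; rewrite Hn // Hn'.
have [lt|gt|eq] := ltngtP n n'.
- by rewrite -(Hn' _ lt).
- by rewrite (Hn _ gt).
- by rewrite -eq in Hl'; exact: ltn_trans Hl Hl'.
Qed.

Lemma lexlt_eq u v u' v' : u =1 u' -> v =1 v' -> lexlt u v -> lexlt u' v'.
Proof.
move=> Eu Ev [n [Hn Hl]]; exists n; split; last by rewrite -Eu -Ev.
by move=> k Hk; rewrite -Eu -Ev Hn.
Qed.

Lemma shiftk_add w a n : shiftk n (shiftk a w) =1 shiftk (a + n) w.
Proof. by move=> k; rewrite /shiftk (addnC a) addnA. Qed.

(* Equal first letters would give [shiftk a.+1 w < shiftk b.+1 w]. *)
Lemma lexlt_shift_head w a b :
  lexlt (shiftk a w) (shiftk b w) -> lexlt (shiftk b.+1 w) (shiftk a.+1 w) ->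
  w a < w b.
Proof.
case=> [[|n] [Hn Hl]] Hba; first by move: Hl; rewrite /shiftk !add0n.
case: (lexlt_asym Hba); exists n; split=> [k Hk|]; rewrite /shiftk !addnS -!addSn.
  exact: Hn.
exact: Hl.
Qed.

Lemma lexlt_chain_bound w (p : nat -> nat) m :
  (forall j, j < m -> lexlt (shiftk (p j) w) (shiftk (p j.+1) w) /\
                      lexlt (shiftk (p j.+1).+1 w) (shiftk (p j).+1 w)) ->
  m < N.
Proof.
move=> chain.
have letter_ge j : j <= m -> j <= w (p j).
  elim: j => // j IH lt_jm; have [lt1 lt2] := chain j lt_jm.
  exact: leq_ltn_trans (IH (ltnW lt_jm)) (lexlt_shift_head lt1 lt2).
exact: leq_ltn_trans (letter_ge m (leqnn m)) (ltn_ord _).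
Qed.

End Lexicographic.

Section PatternsOfNatFunctions.
Variables (L : nat) (f : nat -> nat) (pi : {perm 'I_L}).
Hypothesis pi_val : forall i : 'I_L, val (pi i) = f i.

Lemma defines_ltn N (w : word N) i j : defines w pi -> i < j -> j < L ->
  lexlt (shiftk (f i) w) (shiftk (f j) w).
Proof.
move=> Hw; elim: j => // j IH; rewrite ltnS leq_eqVlt => /predU1P[-> | lt_ij] jL.
  by have := Hw (Ordinal (ltnW jL)) (Ordinal jL) erefl; rewrite !pi_val.
apply: lexlt_trans (IH lt_ij (ltnW jL)) _.
by have := Hw (Ordinal (ltnW jL)) (Ordinal jL) erefl; rewrite !pi_val.
Qed.

(* A chain [P 0 < ... < P N] of positions whose successor values [f (P j) + 1]
   sit at decreasing positions [q j] forces [N+1] increasing letters. *)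
Lemma forbidden_of_chain N (P q : nat -> nat) :
  (forall j, j < N -> P j < P j.+1 /\ q j.+1 < q j) ->
  (forall j, j <= N -> P j < L /\ q j < L) ->
  (forall j, j <= N -> (f (P j)).+1 = f (q j)) ->
  forbidden N pi.
Proof.
move=> mono bound succ [w Hw]; suff: N < N by rewrite ltnn.
apply: (@lexlt_chain_bound _ w (f \o P)) => j lt_jN /=.
have [lt_P lt_q] := mono j lt_jN.
have [PL qL] := bound j (ltnW lt_jN); have [PL' qL'] := bound j.+1 lt_jN.
by rewrite !succ ?(ltnW lt_jN) //; split; apply: defines_ltn.
Qed.

End PatternsOfNatFunctions.

Lemma perm_of_nat_inj L (f : nat -> nat) :
  (forall i, i < L -> f i < L) -> {in gtn L &, injective f} ->
  exists pi : {perm 'I_L}, forall i : 'I_L, val (pi i) = f i.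
Proof.
move=> fL f_inj.
have val_g (i : 'I_L) : val (insubd i (f i)) = f i by rewrite val_insubd fL.
have g_inj : injective (fun i : 'I_L => insubd i (f i)).
  move=> i j /(congr1 val); rewrite !val_g => /f_inj eq_ij.
  by apply/val_inj/eq_ij; rewrite inE.
by exists (perm g_inj) => i; rewrite permE.
Qed.

Lemma defines_of_outgrowth N L M (pi' : {perm 'I_L}) (sigma : {perm 'I_M})
    (n : nat) (idx : 'I_L -> 'I_M) (P : pred 'I_M) (w : word N) :
  (forall k k' : 'I_L, k < k' -> idx k < idx k') ->
  (forall k : 'I_L, val (sigma (idx k)) = val (pi' k) + n) ->
  (forall k, P (idx k)) ->
  (forall i j : 'I_M, i < j -> P i -> P j ->
     lexlt (shiftk (sigma i) w) (shiftk (sigma j) w)) ->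
  defines (shiftk n w) pi'.
Proof.
move=> idx_mono sigma_idx P_idx sigma_lex i j ji.
have := sigma_lex _ _ (idx_mono i j _) (P_idx i) (P_idx j); rewrite ji !sigma_idx.
by move/(_ (ltnSn _)); apply: lexlt_eq => k; rewrite shiftk_add addnC.
Qed.

Definition nat_word N (N_gt0 : 0 < N) (f : nat -> nat) : word N :=
  fun k => Ordinal (ltn_pmod (f k) N_gt0).

Definition nat_shift_lt (f : nat -> nat) (a b : nat) : Prop :=
  exists m, (forall m', m' < m -> f (m' + a) = f (m' + b)) /\ f (m + a) < f (m + b).

Lemma lexlt_nat_word N (N_gt0 : 0 < N) f a b : (forall k, f k < N) ->
  nat_shift_lt f a b ->
  lexlt (shiftk a (nat_word N_gt0 f)) (shiftk b (nat_word N_gt0 f)).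
Proof.
move=> fN [m [Hm Hl]]; exists m; split.
  by move=> k Hk; apply: val_inj; rewrite /= Hm.
by rewrite /= !modn_small.
Qed.

Ltac case_ifs := repeat match goal with
  | |- context [if ?b then _ else _] => case: (boolP b) => ? end.

(* [N-2, N-4, ..., (0 or 1), ..., N-3, N-1]: the values of one parity going
   down, then those of the other parity going up; [zigzag_rank] is its inverse. *)
Definition zigzag (N j : nat) : nat :=
  if j.*2 + 2 <= N then N - 2 - j.*2 else j.*2 + 1 - N.

Definition zigzag_rank (N k : nat) : nat :=
  if odd (N + k) then (k + N - 1)./2 else (N - 2 - k)./2.

Section Zigzag.
Variable N : nat.

Lemma zigzag_lt j : j < N -> zigzag N j < N.
Proof. rewrite /zigzag; case_ifs; lia. Qed.

Lemma zigzag_rank_lt k : k < N -> zigzag_rank N k < N.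
Proof. rewrite /zigzag_rank; case_ifs; lia. Qed.

Lemma zigzagK j : j < N -> zigzag_rank N (zigzag N j) = j.
Proof. rewrite /zigzag => ?; case_ifs; rewrite /zigzag_rank; case_ifs; lia. Qed.

Lemma zigzag_rankK k : k < N -> zigzag N (zigzag_rank N k) = k.
Proof. rewrite /zigzag_rank => ?; case_ifs; rewrite /zigzag; case_ifs; lia. Qed.

Lemma zigzag_inj j j' : j < N -> j' < N -> zigzag N j = zigzag N j' -> j = j'.
Proof. by move=> lt_j lt_j' eq_z; rewrite -(zigzagK lt_j) -(zigzagK lt_j') eq_z. Qed.

Hypothesis N_ge2 : 2 <= N.

Lemma zigzag0 : zigzag N 0 = N - 2.
Proof. rewrite /zigzag; case_ifs; lia. Qed.

Lemma zigzag_last : zigzag N (N - 1) = N - 1.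
Proof. rewrite /zigzag; case_ifs; lia. Qed.

Lemma zigzag_rank0_lt : zigzag_rank N 0 < N - 1.
Proof. rewrite /zigzag_rank; case_ifs; lia. Qed.

Lemma zigzag_gt0_neq_rank0 j : 0 < zigzag N j -> j != zigzag_rank N 0.
Proof. by apply: contraTneq => ->; rewrite zigzag_rankK; lia. Qed.

End Zigzag.

Definition root_pat (N L i : nat) : nat :=
  if i < L - 1 - N then N + i
  else if i < L - 1 then zigzag N (i - (L - 1 - N)) else L - 1.

(* The position of the value [zigzag N k + 1] in [root_pat N L]. *)
Definition succ_pos (N L k : nat) : nat :=
  if k.*2 + 2 <= N then L - 2 - k else if k.+1 < N then L - 3 - k else 0.

Section RootPattern.
Variables (N L : nat).

Lemma root_pat_pad i : i < L - 1 - N -> root_pat N L i = N + i.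
Proof. by rewrite /root_pat => ->. Qed.

Lemma root_pat_mid i : L - 1 - N <= i -> i < L - 1 ->
  root_pat N L i = zigzag N (i - (L - 1 - N)).
Proof. rewrite /root_pat => ? ?; case_ifs; lia. Qed.

Lemma root_pat_top : root_pat N L (L - 1) = L - 1.
Proof. rewrite /root_pat; case_ifs; lia. Qed.

Hypotheses (N_ge2 : 2 <= N) (L_ge : N + 2 <= L).

Lemma root_pat_lt i : i < L -> root_pat N L i < L.
Proof.
rewrite /root_pat => ?; case_ifs; try lia.
have := @zigzag_lt N (i - (L - 1 - N)); lia.
Qed.

Lemma root_pat_inj : {in gtn L &, injective (root_pat N L)}.
Proof.
move=> i i'; rewrite !inE /root_pat => ? ?; case_ifs; try lia; move=> eq_pat;
  have := @zigzag_lt N (i - (L - 1 - N)); have := @zigzag_lt N (i' - (L - 1 - N));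
  try lia.
have := zigzag_inj _ _ eq_pat; lia.
Qed.

Lemma succ_pos_lt k : k < N -> succ_pos N L k < L - 1.
Proof. rewrite /succ_pos; case_ifs; lia. Qed.

Lemma succ_pos_decr k : k.+1 < N -> succ_pos N L k.+1 < succ_pos N L k.
Proof. rewrite /succ_pos; case_ifs; lia. Qed.

Lemma root_pat_succ_pos k : k < N -> root_pat N L (succ_pos N L k) = zigzag N k + 1.
Proof.
rewrite /succ_pos => ?; case_ifs;
  [rewrite root_pat_mid | rewrite root_pat_mid | rewrite root_pat_pad]; try lia;
  by rewrite /zigzag; case_ifs; lia.
Qed.

Lemma root_pat_forbidden (pi : {perm 'I_L}) :
  (forall i : 'I_L, val (pi i) = root_pat N L i) -> forbidden N pi.
Proof.
move=> pi_val.
apply: (forbidden_of_chain pi_val (P := fun j => L - 2 - N + j)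
          (q := fun j => if j is j'.+1 then succ_pos N L j' else L - 1)).
- case=> [|j] lt_jN; split; try lia.
  + have := @succ_pos_lt 0; lia.
  + by apply: succ_pos_decr.
- case=> [|j] le_jN; split; try lia.
  have := @succ_pos_lt j; lia.
- case=> [|j] le_jN.
    by rewrite root_pat_pad ?root_pat_top; lia.
  rewrite root_pat_succ_pos ?root_pat_mid; try lia.
  by rewrite addn1; congr (zigzag _ _).+1; lia.
Qed.

End RootPattern.

(* Realizes [root_pat] on every position but the last one. *)
Definition drop_top_word (N L k : nat) : nat :=
  if k < N then zigzag_rank N k else if k < L then 0 else 1.

(* Ranks below [rank 0] are raised by one, so the zigzag positions other than
   [0] get increasing positive letters; it realizes [root_pat] on the positions
   of the nonzero values. *)
Definition drop_zero_word (N L k : nat) : nat :=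
  if k < N then
    (if zigzag_rank N k < zigzag_rank N 0 then zigzag_rank N k + 1 else zigzag_rank N k)
  else if k < L - 1 then 0 else N - 1.

Section RealizingWords.
Variables (N L : nat).

Lemma drop_top_word_zigzag j : j < N -> drop_top_word N L (zigzag N j) = j.
Proof. by move=> lt_jN; rewrite /drop_top_word zigzag_lt // zigzagK. Qed.

Lemma drop_zero_word_zigzag j : j < N ->
  drop_zero_word N L (zigzag N j) = if j < zigzag_rank N 0 then j + 1 else j.
Proof. by move=> lt_jN; rewrite /drop_zero_word zigzag_lt // zigzagK. Qed.

Hypotheses (N_ge2 : 2 <= N) (L_ge : N + 2 <= L).

Lemma drop_top_word_lt k : drop_top_word N L k < N.
Proof. rewrite /drop_top_word; case_ifs; try lia; have := @zigzag_rank_lt N k; lia. Qed.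

Lemma drop_top_word_realizes i i' : i < i' -> i' < L - 1 ->
  nat_shift_lt (drop_top_word N L) (root_pat N L i) (root_pat N L i').
Proof.
move=> lt_ii' lt_i'L.
have [pad_i|mid_i] := ltnP i (L - 1 - N); have [pad_i'|mid_i'] := ltnP i' (L - 1 - N).
- rewrite !root_pat_pad //; exists (L - N - i'); split.
    by move=> m' lt_m'; rewrite /drop_top_word; case_ifs; lia.
  rewrite /drop_top_word; case_ifs; lia.
- rewrite root_pat_pad // root_pat_mid //.
  case: (posnP (i' - (L - 1 - N))) => [-> | pos_j].
  + exists 1; split.
      move=> m'; rewrite ltnS leqn0 => /eqP ->.
      rewrite zigzag0 // /drop_top_word; case_ifs; try lia.
      by rewrite /zigzag_rank; case_ifs; lia.
    have -> : 1 + zigzag N 0 = zigzag N (N - 1) by rewrite zigzag0 ?zigzag_last //; lia.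
    rewrite drop_top_word_zigzag; try lia; rewrite /drop_top_word; case_ifs; lia.
  + exists 0; split => //; rewrite !add0n drop_top_word_zigzag; try lia.
    rewrite /drop_top_word; case_ifs; lia.
- lia.
- rewrite !root_pat_mid //; try lia; exists 0; split => //.
  rewrite !add0n !drop_top_word_zigzag; lia.
Qed.

Lemma drop_zero_word_lt k : drop_zero_word N L k < N.
Proof.
have := zigzag_rank0_lt N_ge2; have := @zigzag_rank_lt N k.
rewrite /drop_zero_word; case_ifs; lia.
Qed.

Lemma drop_zero_word_realizes i i' : i < i' -> i' < L ->
  0 < root_pat N L i -> 0 < root_pat N L i' ->
  nat_shift_lt (drop_zero_word N L) (root_pat N L i) (root_pat N L i').
Proof.
move=> lt_ii' lt_i'L.
have rank0_lt := zigzag_rank0_lt N_ge2.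
have [pad_i|mid_i] := ltnP i (L - 1 - N); have [pad_i'|mid_i'] := ltnP i' (L - 1 - N).
- rewrite !root_pat_pad // => _ _; exists (L - 1 - N - i'); split.
    by move=> m' lt_m'; rewrite /drop_zero_word; case_ifs; lia.
  rewrite /drop_zero_word; case_ifs; lia.
- rewrite root_pat_pad //; have [top_i'|->] : i' < L - 1 \/ i' = L - 1 by lia.
  + rewrite root_pat_mid // => _ pos; exists 0; split => //; rewrite !add0n.
    have := zigzag_gt0_neq_rank0 N_ge2 pos.
    rewrite drop_zero_word_zigzag; try lia; rewrite /drop_zero_word; case_ifs; lia.
  + rewrite root_pat_top // => _ _; exists 0; split => //.
    rewrite /drop_zero_word; case_ifs; lia.
- lia.
- rewrite root_pat_mid //; try lia.
  have [top_i'|->] : i' < L - 1 \/ i' = L - 1 by lia.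
  + rewrite root_pat_mid // => pos pos'; exists 0; split => //.
    have := zigzag_gt0_neq_rank0 N_ge2 pos; have := zigzag_gt0_neq_rank0 N_ge2 pos'.
    rewrite !add0n !drop_zero_word_zigzag; try lia; case_ifs; lia.
  + rewrite root_pat_top // => pos _.
    have [last_j|not_last] := eqVneq (i - (L - 1 - N)) (N - 1).
    * exists 1; split.
        move=> m'; rewrite ltnS leqn0 => /eqP ->.
        rewrite !add0n last_j drop_zero_word_zigzag; try lia.
        by rewrite /drop_zero_word; case_ifs; lia.
      rewrite last_j zigzag_last // /drop_zero_word; case_ifs; lia.
    * exists 0; split => //; rewrite !add0n drop_zero_word_zigzag; try lia.
      rewrite /drop_zero_word; case_ifs; lia.
Qed.

End RealizingWords.

Lemma root_pat_no_forbidden_outgrowth N L (pi : {perm 'I_L}) L' (pi' : {perm 'I_L'}) :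
  2 <= N -> N + 2 <= L -> (forall i : 'I_L, val (pi i) = root_pat N L i) ->
  L' < L -> forbidden N pi' -> ~ outgrowth pi' pi.
Proof.
move=> N_ge2 L_ge pi_val lt_L' not_def [_ [n [idx [_ [idx_mono pi_idx]]]]].
have N_gt0 : 0 < N by lia.
apply: not_def; case: (posnP n) => [n0 | n_gt0].
- exists (shiftk n (nat_word N_gt0 (drop_top_word N L))).
  apply: (defines_of_outgrowth (P := fun i : 'I_L => i < L - 1) idx_mono pi_idx).
    move=> k; rewrite ltnNge; apply/negP => top_le.
    have top : idx k = L - 1 :> nat by have := ltn_ord (idx k); lia.
    have := pi_idx k; rewrite pi_val top root_pat_top // n0 addn0.
    by have := ltn_ord (pi' k); rewrite /=; lia.
  move=> i j lt_ij _ top_j; rewrite !pi_val.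
  apply: lexlt_nat_word; first exact: drop_top_word_lt.
  exact: drop_top_word_realizes lt_ij top_j.
- exists (shiftk n (nat_word N_gt0 (drop_zero_word N L))).
  apply: (defines_of_outgrowth (P := fun i : 'I_L => 0 < pi i) idx_mono pi_idx).
    by move=> k; rewrite pi_idx addn_gt0 n_gt0 orbT.
  move=> i j lt_ij pos_i pos_j; rewrite !pi_val in pos_i pos_j *.
  apply: lexlt_nat_word; first exact: drop_zero_word_lt.
  exact: drop_zero_word_realizes lt_ij (ltn_ord j) pos_i pos_j.
Qed.

Theorem proposition5 (N : nat) (hN : (2 <= N)%N) (L : nat) (hL : (N + 2 <= L)%N) :
  exists pi : {perm 'I_L}, forbidden_root N pi.
Proof.
have [pi pi_val] := perm_of_nat_inj (root_pat_lt hN hL) (root_pat_inj hN hL).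
exists pi; split; first exact: root_pat_forbidden hN hL _ pi_val.
by move=> L' pi'; apply: root_pat_no_forbidden_outgrowth pi_val.
Qed.
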